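(* Let $A,B\in\mathcal{B}(\mathcal{H})$. Then \begin{equation*} w\left(\begin{bmatrix} 0 &A \\ B& 0 \end{bmatrix}\right)+\frac{|w(A+B)-w(A-B)|}{2}\leq w(A)+w(B). \end{equation*}
   Context: $\mathcal{H}$ is a complex Hilbert space and $\mathcal{B}(\mathcal{H})$ is the $C^*$-algebra of all bounded linear operators on $\mathcal{H}$. For $T\in\mathcal{B}(\mathcal{H})$, $w(T)=\sup\{|\langle Tx,x\rangle|:\|x\|=1\}$ is the numerical radius. A $2\times 2$ operator matrix with entries in $\mathcal{B}(\mathcal{H})$ is regarded as an operator on $\mathcal{H}\oplus\mathcal{H}$. *)

From HB Require Import structures.
From mathcomp Require Import all_boot all_order all_algebra.
From mathcomp Require Import complex.
From mathcomp Require Import classical_sets reals.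
Set Implicit Arguments. Unset Strict Implicit. Unset Printing Implicit Defensive.
Import Order.TTheory GRing.Theory Num.Theory.
Local Open Scope ring_scope.
Local Open Scope classical_set_scope.

Section Hilbert.
Variable R : realType.
Local Notation C := R[i].
Variable V : lmodType C.

Definition inner_product_axioms (ip : V -> V -> C) : Prop :=
  [/\ forall (a : C) (x y z : V), ip (a *: x + y) z = a * ip x z + ip y z,
      forall x y : V, ip y x = conjc (ip x y),
      forall x : V, 0 <= ip x x
    & forall x : V, ip x x = 0 -> x = 0].

Definition hnorm (ip : V -> V -> C) (x : V) : R := Num.sqrt (complex.Re (ip x x)).

Definition hcomplete (ip : V -> V -> C) : Prop :=
  forall u : nat -> V,
    (forall e : R, 0 < e -> exists N : nat, forall m n : nat,
        (N <= m)%N -> (N <= n)%N -> hnorm ip (u m - u n) < e) ->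
    exists l : V, forall e : R, 0 < e -> exists N : nat, forall n : nat,
        (N <= n)%N -> hnorm ip (u n - l) < e.

Definition is_hilbert (ip : V -> V -> C) : Prop :=
  inner_product_axioms ip /\ hcomplete ip.

Definition bounded_op (ip : V -> V -> C) (T : V -> V) : Prop :=
  (forall (a : C) (x y : V), T (a *: x + y) = a *: T x + T y) /\
  exists M : R, forall x : V, hnorm ip (T x) <= M * hnorm ip x.

Definition numrad (ip : V -> V -> C) (T : V -> V) : R :=
  sup [set Normc.normc (ip (T x) x) | x in [set x : V | hnorm ip x = 1]].

End Hilbert.

Definition dsum_ip (R : realType) (V : lmodType R[i]) (ip : V -> V -> R[i])
  (p q : (V * V)%type) : R[i] := ip p.1 q.1 + ip p.2 q.2.

(* the operator matrix [[0, A], [B, 0]] acting on H (+) H *)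
Definition offdiag (R : realType) (V : lmodType R[i]) (A B : V -> V)
  (p : (V * V)%type) : (V * V)%type := (A p.2, B p.1).

From HB Require Import structures.
From mathcomp Require Import all_boot all_order all_algebra.
From mathcomp Require Import complex.
From mathcomp Require Import boolp classical_sets reals.
From mathcomp Require Import ring lra.
Set Implicit Arguments. Unset Strict Implicit. Unset Printing Implicit Defensive.
Import Order.TTheory GRing.Theory Num.Theory.
Local Open Scope ring_scope.
Local Open Scope complex_scope.
Local Open Scope classical_set_scope.

(* With [P = A + B] and [Q = A - B], the quadratic form of the off-diagonal
   matrix at [(x, y)] is [<Ay,x> + <Bx,y> = ((<Px,y> + <Py,x>) + (<Qy,x> - <Qx,y>)) / 2].
   By polarization, [|<Tx,y> + <Ty,x>|] and [|<Ty,x> - <Tx,y>|] are both at most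
   [w(T) (|x|^2 + |y|^2)], so [w] of the matrix is at most [(w(P) + w(Q)) / 2].
   Adding [|w(P) - w(Q)| / 2] gives [max (w(P), w(Q))], and both [w(P)] and
   [w(Q)] are at most [w(A) + w(B)]. *)

Local Notation normc := Normc.normc.

Section ComplexFacts.
Variable R : rcfType.

Lemma normc_real (r : R) : normc r%:C = `|r|.
Proof. by rewrite /normc /= expr0n addr0 sqrtr_sqr. Qed.

Lemma normc_ge0 (z : R[i]) : 0 <= normc z.
Proof. by case: z => a b; apply: sqrtr_ge0. Qed.

Lemma normc_i : normc ('i%C : R[i]) = 1.
Proof. by rewrite /normc /= expr0n expr1n add0r sqrtr1. Qed.

Lemma conjc_i : conjc ('i%C : R[i]) = - 'i%C.
Proof. by apply/eqP; rewrite eq_complex /= oppr0 !eqxx. Qed.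

Lemma mulc_i_conj : 'i%C * conjc ('i%C : R[i]) = 1.
Proof. by rewrite conjc_i mulrN -expr2 sqr_i opprK. Qed.

End ComplexFacts.

Section NumericalRadius.
Variables (R : realType) (V : lmodType R[i]) (ip : V -> V -> R[i]).

Definition abs_numrange (T : V -> V) : set R :=
  [set normc (ip (T x) x) | x in [set x | hnorm ip x = 1]].

Lemma abs_numrange_ub T c :
  (forall x, hnorm ip x = 1 -> normc (ip (T x) x) <= c) ->
  has_ubound (abs_numrange T).
Proof. by move=> hc; exists c => _ [x hx <-]; apply: hc. Qed.

Lemma numrad_ub T x : has_ubound (abs_numrange T) ->
  hnorm ip x = 1 -> normc (ip (T x) x) <= numrad ip T.
Proof.
move=> ubT hx; apply: sup_upper_bound; last by exists x.
by split=> //; exists (normc (ip (T x) x)); exists x.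
Qed.

Lemma numrad_ge0 T : has_ubound (abs_numrange T) -> 0 <= numrad ip T.
Proof.
move=> ubT; rewrite /numrad -/(abs_numrange T).
have [->|/set0P[_ [x hx _]]] := eqVneq (abs_numrange T) set0; first by rewrite sup0.
exact: le_trans (normc_ge0 _) (numrad_ub ubT hx).
Qed.

(* [0 <= c] is needed for the zero space, whose numerical radius is [sup set0 = 0]. *)
Lemma numrad_le T c : 0 <= c ->
  (forall x, hnorm ip x = 1 -> normc (ip (T x) x) <= c) -> numrad ip T <= c.
Proof.
move=> c0 hc; rewrite /numrad -/(abs_numrange T).
have [->|/set0P ne] := eqVneq (abs_numrange T) set0; first by rewrite sup0.
by apply: ge_sup => // _ [x hx <-]; apply: hc.
Qed.

Section Dominated.
Variables (S A B : V -> V).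
Hypotheses (ubA : has_ubound (abs_numrange A)) (ubB : has_ubound (abs_numrange B)).
Hypothesis S_dominated : forall x,
  normc (ip (S x) x) <= normc (ip (A x) x) + normc (ip (B x) x).

Let normc_ip_S_le x : hnorm ip x = 1 -> normc (ip (S x) x) <= numrad ip A + numrad ip B.
Proof. by move=> hx; apply: le_trans (S_dominated x) _; apply: lerD; apply: numrad_ub. Qed.

Lemma abs_numrange_ub_dominated : has_ubound (abs_numrange S).
Proof. exact: abs_numrange_ub normc_ip_S_le. Qed.

Lemma numrad_le_dominated : numrad ip S <= numrad ip A + numrad ip B.
Proof. by apply: numrad_le normc_ip_S_le; rewrite addr_ge0 // numrad_ge0. Qed.

End Dominated.
End NumericalRadius.

Section InnerProduct.
Variables (R : realType) (V : lmodType R[i]) (ip : V -> V -> R[i]).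
Hypothesis ipA : inner_product_axioms ip.

Lemma ipDZl a x y z : ip (a *: x + y) z = a * ip x z + ip y z.
Proof. by case: ipA. Qed.

Lemma ip_conj x y : ip y x = conjc (ip x y).
Proof. by case: ipA. Qed.

Lemma ipDl x y z : ip (x + y) z = ip x z + ip y z.
Proof. by rewrite -[x]scale1r ipDZl mul1r scale1r. Qed.

Lemma ip0l z : ip 0 z = 0.
Proof. by apply: (addrI (ip 0 z)); rewrite -ipDl !addr0. Qed.

Lemma ipZl a x z : ip (a *: x) z = a * ip x z.
Proof. by rewrite -[a *: x]addr0 ipDZl ip0l addr0. Qed.

Lemma ipNl x z : ip (- x) z = - ip x z.
Proof. by rewrite -scaleN1r ipZl mulN1r. Qed.

Lemma ipBl x y z : ip (x - y) z = ip x z - ip y z.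
Proof. by rewrite ipDl ipNl. Qed.

Lemma ipDr x y z : ip z (x + y) = ip z x + ip z y.
Proof. by rewrite ip_conj ipDl rmorphD /= -!ip_conj. Qed.

Lemma ipNr x z : ip z (- x) = - ip z x.
Proof. by rewrite ip_conj ipNl rmorphN /= -ip_conj. Qed.

Lemma ipZr a x z : ip z (a *: x) = conjc a * ip z x.
Proof. by rewrite ip_conj ipZl rmorphM /= -ip_conj. Qed.

Definition sqnorm x := complex.Re (ip x x).

Lemma ip_sqnorm x : ip x x = (sqnorm x)%:C.
Proof.
have : 0 <= ip x x by case: ipA.
by rewrite /sqnorm; case: (ip x x) => a b; rewrite lecE /= => /andP[/eqP-> _].
Qed.

Lemma sqnorm_ge0 x : 0 <= sqnorm x.
Proof. by rewrite -ler0c -ip_sqnorm; case: ipA. Qed.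

Lemma sqnorm_eq0 x : sqnorm x = 0 -> x = 0.
Proof. by move=> x0; case: ipA => _ _ _; apply; rewrite ip_sqnorm x0. Qed.

Lemma sqnormE x : sqnorm x = hnorm ip x ^+ 2.
Proof. by rewrite sqr_sqrtr // sqnorm_ge0. Qed.

Lemma ip_sqnormZ a x : ip (a *: x) (a *: x) = a * conjc a * ip x x.
Proof. by rewrite ipZl ipZr mulrA. Qed.

Lemma sqnorm_parallelogram x y :
  sqnorm (x + y) + sqnorm (x - y) = (sqnorm x + sqnorm y) *+ 2.
Proof.
apply: (@complexI R); rewrite !rmorphMn !rmorphD /= -!ip_sqnorm.
by rewrite !ipDl !ipDr !ipNl !ipNr; ring.
Qed.

Section LinearOperator.
Variable T : {linear V -> V}.

Lemma ip_polarization_sym x y :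
  (ip (T x) y + ip (T y) x) *+ 2 = ip (T (x + y)) (x + y) - ip (T (x - y)) (x - y).
Proof. by rewrite !raddfD !raddfN !ipDl !ipDr !ipNl !ipNr; ring. Qed.

Section NumrangeBound.
Variable K : R.
Hypothesis normc_ipT_le : forall z, normc (ip (T z) z) <= K * sqnorm z.

Lemma normc_ip_sym_le x y :
  normc (ip (T x) y + ip (T y) x) <= K * (sqnorm x + sqnorm y).
Proof.
have le2 : normc (ip (T x) y + ip (T y) x) *+ 2 <= K * sqnorm (x + y) + K * sqnorm (x - y).
  rewrite -normcMn ip_polarization_sym; apply: le_trans (le_normcD _ _) _.
  by rewrite normcN; apply: lerD.
by move: le2; rewrite -mulrDr sqnorm_parallelogram mulrnAr ler_pMn2r.
Qed.

Lemma normc_ip_skew_le x y :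
  normc (ip (T y) x - ip (T x) y) <= K * (sqnorm x + sqnorm y).
Proof.
have sqnorm_ix : sqnorm ('i%C *: x) = sqnorm x.
  by apply: (@complexI R); rewrite -!ip_sqnorm ip_sqnormZ mulc_i_conj mul1r.
have := normc_ip_sym_le ('i%C *: x) y.
rewrite sqnorm_ix linearZ ipZl ipZr conjc_i.
have -> : 'i%C * ip (T x) y + - 'i%C * ip (T y) x = - 'i%C * (ip (T y) x - ip (T x) y).
  by ring.
by rewrite Normc.normcM normcN normc_i mul1r.
Qed.

Lemma normc_ip_le x y : normc (ip (T x) y) <= K * (sqnorm x + sqnorm y).
Proof.
have split2 : ip (T x) y *+ 2 = (ip (T x) y + ip (T y) x) - (ip (T y) x - ip (T x) y).
  by ring.
have : normc (ip (T x) y) *+ 2 <= (K * (sqnorm x + sqnorm y)) *+ 2.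
  rewrite -normcMn split2 mulr2n; apply: le_trans (le_normcD _ _) _.
  by rewrite normcN; apply: lerD; [apply: normc_ip_sym_le | apply: normc_ip_skew_le].
by rewrite ler_pMn2r.
Qed.

End NumrangeBound.

Lemma normc_ip_le_numrad : has_ubound (abs_numrange ip T) ->
  forall z, normc (ip (T z) z) <= numrad ip T * sqnorm z.
Proof.
move=> ubT z; have [z0|z_neq0] := eqVneq (sqnorm z) 0.
  by rewrite z0 mulr0 (sqnorm_eq0 z0) linear0 ip0l Normc.normc0.
set t := Num.sqrt (sqnorm z); set a := (t^-1)%:C.
have t_gt0 : 0 < t by rewrite sqrtr_gt0 lt0r z_neq0 sqnorm_ge0.
have t2_neq0 : t ^+ 2 != 0 by rewrite expf_neq0 // lt0r_neq0.
have sqnorm_t : sqnorm z = t ^+ 2 by rewrite sqr_sqrtr // sqnorm_ge0.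
have aa : a * conjc a = (t ^- 2)%:C by rewrite conjc_real -rmorphM -expr2 exprVn.
have unit_az : hnorm ip (a *: z) = 1.
  rewrite /hnorm -/(sqnorm _) (_ : sqnorm _ = 1) ?sqrtr1 //.
  apply: (@complexI R); rewrite -ip_sqnorm ip_sqnormZ aa ip_sqnorm -rmorphM sqnorm_t.
  by rewrite mulVf.
have := numrad_ub ubT unit_az.
rewrite linearZ ipZl ipZr mulrA aa Normc.normcM normc_real ger0_norm; last first.
  by rewrite invr_ge0 exprn_ge0 // ltW.
rewrite sqnorm_t -[X in _ <= X -> _](mulfK t2_neq0).
by rewrite mulrC ler_pM2r // invr_gt0 exprn_gt0.
Qed.

End LinearOperator.

Lemma normc_ip_le_sqnorm x y : normc (ip x y) <= sqnorm x + sqnorm y.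
Proof.
rewrite -[sqnorm x + _]mul1r; apply: (@normc_ip_le idfun) => z /=.
by rewrite mul1r ip_sqnorm normc_real ger0_norm // sqnorm_ge0.
Qed.

Lemma bounded_op_abs_numrange_ub T : bounded_op ip T -> has_ubound (abs_numrange ip T).
Proof.
case=> _ [M hM]; apply: (abs_numrange_ub (c := M ^+ 2 + 1)) => x hx.
apply: le_trans (normc_ip_le_sqnorm _ _) _.
have := hM x; rewrite !sqnormE hx expr1n mulr1 lerD2r => le_M.
have Tx_ge0 : 0 <= hnorm ip (T x) by apply: sqrtr_ge0.
by rewrite ler_sqr ?nnegrE // (le_trans Tx_ge0 le_M).
Qed.

Lemma numrad_offdiag_le (A B : {linear V -> V}) :
  has_ubound (abs_numrange ip (A \+ B)) -> has_ubound (abs_numrange ip (A \- B)) ->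
  numrad (dsum_ip ip) (offdiag A B) <= (numrad ip (A \+ B) + numrad ip (A \- B)) / 2.
Proof.
move=> ubP ubQ; apply: numrad_le => [|[x y] unit_xy].
  by rewrite divr_ge0 // addr_ge0 // numrad_ge0.
have {}unit_xy : sqnorm x + sqnorm y = 1.
  move: unit_xy; rewrite /hnorm /dsum_ip /= !ip_sqnorm -rmorphD /=.
  by move/(congr1 (fun r => r ^+ 2)); rewrite sqr_sqrtr ?addr_ge0 ?sqnorm_ge0 // expr1n.
have symP : normc (ip ((A \+ B) x) y + ip ((A \+ B) y) x) <= numrad ip (A \+ B).
  by rewrite -[numrad _ _]mulr1 -unit_xy; apply/normc_ip_sym_le/normc_ip_le_numrad.
have skewQ : normc (ip ((A \- B) y) x - ip ((A \- B) x) y) <= numrad ip (A \- B).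
  by rewrite -[numrad _ _]mulr1 -unit_xy; apply/normc_ip_skew_le/normc_ip_le_numrad.
have split2 : (ip (A y) x + ip (B x) y) *+ 2 =
    (ip ((A \+ B) x) y + ip ((A \+ B) y) x) + (ip ((A \- B) y) x - ip ((A \- B) x) y).
  by rewrite /= !ipDl !ipNl; ring.
have : normc (ip (A y) x + ip (B x) y) *+ 2 <= numrad ip (A \+ B) + numrad ip (A \- B).
  by rewrite -normcMn split2; apply: le_trans (le_normcD _ _) _; apply: lerD.
rewrite /dsum_ip /offdiag /= mulr2n; lra.
Qed.

End InnerProduct.

Theorem theorem4p14 (R : realType) (V : lmodType R[i]) (ip : V -> V -> R[i])
  (HH : is_hilbert ip) (A B : V -> V)
  (hA : bounded_op ip A) (hB : bounded_op ip B) :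
  numrad (dsum_ip ip) (offdiag A B)
    + `|numrad ip (fun x => A x + B x) - numrad ip (fun x => A x - B x)| / 2
  <= numrad ip A + numrad ip B.
Proof.
have [[ipA _] [[linA _] [linB _]]] := (HH, (hA, hB)).
pose Al : {linear V -> V} := HB.pack A (GRing.isLinear.Build _ _ _ _ A linA).
pose Bl : {linear V -> V} := HB.pack B (GRing.isLinear.Build _ _ _ _ B linB).
have ubA := bounded_op_abs_numrange_ub ipA hA.
have ubB := bounded_op_abs_numrange_ub ipA hB.
have dominatedD x : normc (ip ((Al \+ Bl) x) x) <= normc (ip (A x) x) + normc (ip (B x) x).
  by rewrite /= (ipDl ipA); apply: le_normcD.
have dominatedB x : normc (ip ((Al \- Bl) x) x) <= normc (ip (A x) x) + normc (ip (B x) x).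
  by rewrite /= (ipBl ipA) -(normcN (ip (B x) x)); apply: le_normcD.
have wP := numrad_le_dominated ubA ubB dominatedD.
have wQ := numrad_le_dominated ubA ubB dominatedB.
have := numrad_offdiag_le ipA (abs_numrange_ub_dominated ubA ubB dominatedD)
  (abs_numrange_ub_dominated ubA ubB dominatedB).
change (Al \+ Bl) with (fun x => A x + B x) in wP |- *.
change (Al \- Bl) with (fun x => A x - B x) in wQ |- *.
set p := numrad ip (fun x => A x + B x) in wP *; set q := numrad ip (fun x => A x - B x) in wQ *.
have : `|p - q| <= (numrad ip A + numrad ip B) *+ 2 - p - q.
  by rewrite ler_norml; apply/andP; split; lra.
lra.
Qed.
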